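(* Let $m\ge1$, $0<\lambda_1\le\dots\le\lambda_m$, $0<\Lambda_0\le\Lambda_1$, and let $a,b$ be positive definite $m\times m$ matrices with $\Lambda_0I\le a\le\Lambda_1I$ and $\Lambda_0I\le b\le\Lambda_1I$. For $w\in\mathbb{R}^m$ set $\theta=\Lambda_0^{-1}m\|a-b\|_s$ and $\phi=\Lambda_0^{-2}\|w\|^2\|a-b\|_s$. For any $M>0$ there is a constant $c_1=c_1(M)$ such that if $\theta,\phi<M$ then for all $t>0$, $$\Big|\frac{Q_m(w,\widetilde A(t))}{Q_m(w,\widetilde B(t))}-1\Big|\le c_1(\phi+\theta).$$
   Context: $E(s)$ is the diagonal matrix with entries $e^{-\lambda_is}$; $a(t)=\int_0^tE(s)\,a\,E(s)\,ds$ (so $a_{ij}(t)=a_{ij}(1-e^{-(\lambda_i+\lambda_j)t})/(\lambda_i+\lambda_j)$); $g(t)$ is diagonal with $g_{ii}(t)=(1-e^{-2\lambda_it})/(2\lambda_i)$ and $G(t)=g(t)^{-1}$; $\widetilde a(t)=G(t)^{1/2}a(t)G(t)^{1/2}$ and $\widetilde A(t)=\widetilde a(t)^{-1}$; $b(t),\widetilde b(t),\widetilde B(t)$ are defined analogously from $b$. $\|c\|_s=\max\{\sup_i\sum_j|c_{ij}|,\sup_j\sum_i|c_{ij}|\}$. $Q_m(w,C)=(2\pi)^{-m/2}(\det C)^{1/2}e^{-\langle w,Cw\rangle/2}$ for positive definite $C$. *)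

From HB Require Import structures.
From mathcomp Require Import all_boot all_order all_algebra.
From mathcomp Require Import all_classical all_reals all_analysis.
Set Implicit Arguments. Unset Strict Implicit. Unset Printing Implicit Defensive.
Import Order.TTheory GRing.Theory Num.Theory.
Local Open Scope ring_scope.

Section Defs.
Variable R : realType.

Definition qform (m : nat) (c : 'M[R]_m) (x : 'rV[R]_m) : R :=
  (x *m c *m x^T) 0 0.

Definition sqnorm (m : nat) (x : 'rV[R]_m) : R := \sum_i x 0 i ^+ 2.

Definition posdef (m : nat) (c : 'M[R]_m) : Prop :=
  c^T = c /\ forall x : 'rV[R]_m, x != 0 -> 0 < qform c x.

Definition loewner_bounds (m : nat) (L0 L1 : R) (c : 'M[R]_m) : Prop :=
  forall x : 'rV[R]_m, L0 * sqnorm x <= qform c x <= L1 * sqnorm x.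

Definition snorm (m : nat) (c : 'M[R]_m) : R :=
  Num.max (\big[Num.max/0]_i \sum_j `|c i j|)
          (\big[Num.max/0]_j \sum_i `|c i j|).

Definition mat_t (m : nat) (lam : 'I_m -> R) (a : 'M[R]_m) (t : R) : 'M[R]_m :=
  \matrix_(i, j) (a i j * (1 - expR (- (lam i + lam j) * t)) / (lam i + lam j)).

Definition g_t (m : nat) (lam : 'I_m -> R) (t : R) (i : 'I_m) : R :=
  (1 - expR (- (2 * lam i) * t)) / (2 * lam i).

Definition Ghalf (m : nat) (lam : 'I_m -> R) (t : R) : 'M[R]_m :=
  diag_mx (\row_i Num.sqrt ((g_t lam t i)^-1)).

Definition tilde_mat (m : nat) (lam : 'I_m -> R) (a : 'M[R]_m) (t : R) : 'M[R]_m :=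
  Ghalf lam t *m mat_t lam a t *m Ghalf lam t.

Definition Tilde_inv (m : nat) (lam : 'I_m -> R) (a : 'M[R]_m) (t : R) : 'M[R]_m :=
  invmx (tilde_mat lam a t).

Definition Qm (m : nat) (w : 'rV[R]_m) (C : 'M[R]_m) : R :=
  (2 * pi) `^ (- (m%:R / 2)) * Num.sqrt (\det C) * expR (- (qform C w / 2)).

End Defs.

(* The rescaled matrix [tilde_mat lam a t] is the Schur product of [a] with a positive
   semidefinite matrix with unit diagonal.  Hence it inherits the lower bound [L0 I] of [a], and
   the entries of [tilde_mat lam a t - tilde_mat lam b t] are dominated by those of [a - b], so by
   Schur's test the two quadratic forms differ by at most [||a - b||_s |x|^2].  Such a
   perturbation of matrices above [L0 I] changes the determinant by a factor at most
   [exp theta] (monotonicity of [det] in the Loewner order) and the inverse quadratic form at [w]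
   by at most [phi], so the ratio of the two Gaussian densities lies between
   [exp (-(theta + phi) / 2)] and [exp ((theta + phi) / 2)]. *)

From HB Require Import structures.
From mathcomp Require Import all_boot all_order all_algebra.
From mathcomp Require Import all_classical all_reals all_analysis.
From mathcomp Require Import ring lra.
Import Order.TTheory GRing.Theory Num.Theory.
Import numFieldNormedType.Exports.
Local Open Scope ring_scope.

Set Implicit Arguments.
Unset Strict Implicit.

Section QuadraticForms.
Variable R : realType.
Implicit Types (n : nat) (k : R).

Definition bform n (E : 'M[R]_n) (u v : 'rV[R]_n) : R := (u *m E *m v^T) 0 0.

Definition coercive n (L0 : R) (P : 'M[R]_n) : Prop :=
  forall x, L0 * sqnorm x <= qform P x.

Lemma qformE n (E : 'M[R]_n) x : qform E x = \sum_i \sum_j x 0 i * E i j * x 0 j.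
Proof.
rewrite /qform mxE (eq_bigr (fun j => \sum_i x 0 i * E i j * x 0 j)).
  exact: exchange_big.
by move=> j _; rewrite !mxE mulr_suml.
Qed.

Lemma bformC n (E : 'M[R]_n) u v : E^T = E -> bform E v u = bform E u v.
Proof.
move=> sE; have e : (v *m E *m u^T)^T = u *m E *m v^T.
  by rewrite !trmx_mul trmxK sE mulmxA.
by rewrite /bform -e [RHS]mxE.
Qed.

Lemma qformDr n (E : 'M[R]_n) u v : E^T = E ->
  qform E (u + v) = qform E u + 2 * bform E u v + qform E v.
Proof.
move=> sE; have e : v *m E *m u^T = u *m E *m v^T.
  by apply/matrixP => i j; rewrite !ord1; exact: bformC.
by rewrite /qform /bform linearD /= !mulmxDl !mulmxDr e !mxE; ring.
Qed.

Lemma qformBr n (E : 'M[R]_n) u v : E^T = E ->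
  qform E (u - v) = qform E u - 2 * bform E u v + qform E v.
Proof.
move=> sE; rewrite qformDr //.
have -> : bform E u (- v) = - bform E u v by rewrite /bform linearN /= mulmxN mxE.
have -> : qform E (- v) = qform E v.
  by rewrite /qform linearN /= !mulNmx mulmxN opprK.
ring.
Qed.

Lemma qform0 n (E : 'M[R]_n) : qform E 0 = 0.
Proof. by rewrite /qform !mul0mx mxE. Qed.

Lemma qformBl n (A B : 'M[R]_n) x : qform (A - B) x = qform A x - qform B x.
Proof. by rewrite /qform mulmxBr mulmxBl !mxE. Qed.

Lemma qformZl n k (A : 'M[R]_n) x : qform (k *: A) x = k * qform A x.
Proof. by rewrite /qform -scalemxAr -scalemxAl mxE. Qed.

Lemma qform_scalar n k (x : 'rV[R]_n) : qform k%:M x = k * sqnorm x.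
Proof.
rewrite -scalemx1 qformZl /qform mulmx1 mxE /sqnorm; congr (_ * _).
by apply: eq_bigr => i _; rewrite mxE expr2.
Qed.

Lemma bform_delta n (E : 'M[R]_n) i j : bform E (delta_mx 0 i) (delta_mx 0 j) = E i j.
Proof. by rewrite /bform trmx_delta -rowE -colE !mxE. Qed.

Lemma sqnorm_ge0 n (x : 'rV[R]_n) : 0 <= sqnorm x.
Proof. by apply: sumr_ge0 => i _; exact: sqr_ge0. Qed.

Lemma sqnorm_gt0 n (x : 'rV[R]_n) : x != 0 -> 0 < sqnorm x.
Proof.
move=> x0; rewrite lt_def sqnorm_ge0 andbT; apply: contra x0 => /eqP s0.
apply/eqP/matrixP => i j; rewrite (ord1 i) mxE.
have xj0 := psumr_eq0P (fun j _ => sqr_ge0 (x 0 j)) s0.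
by apply/eqP; rewrite -sqrf_eq0 xj0.
Qed.

Lemma coercive_qform_gt0 n L0 (P : 'M[R]_n) : 0 < L0 -> coercive L0 P ->
  forall x, x != 0 -> 0 < qform P x.
Proof.
by move=> L0_gt0 PL0 x x0; apply: lt_le_trans (PL0 x); rewrite mulr_gt0 ?sqnorm_gt0.
Qed.

(* Test the form on [e_i + e_j] and [e_i - e_j]. *)
Lemma psd_entry_le n (E : 'M[R]_n) i j : E^T = E -> (forall z, 0 <= qform E z) ->
  `|E i j| <= (E i i + E j j) / 2.
Proof.
move=> sE E_psd.
have := E_psd (delta_mx 0 i + delta_mx 0 j); have := E_psd (delta_mx 0 i - delta_mx 0 j).
rewrite qformBr // qformDr // /qform -!/(bform _ _ _) !bform_delta => h1 h2.
rewrite ler_norml; apply/andP; split; lra.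
Qed.

Lemma snorm_ge0 n (D : 'M[R]_n) : 0 <= snorm D.
Proof. by rewrite /snorm le_max bigmax_ge_id. Qed.

Lemma row_le_snorm n (D : 'M[R]_n) i : \sum_j `|D i j| <= snorm D.
Proof. by rewrite /snorm le_max; apply/orP; left; apply: le_bigmax. Qed.

Lemma col_le_snorm n (D : 'M[R]_n) j : \sum_i `|D i j| <= snorm D.
Proof. by rewrite /snorm le_max; apply/orP; right; apply: le_bigmax. Qed.

(* Schur's test: [|x_i x_j| <= (x_i^2 + x_j^2)/2], then sum rows and columns. *)
Lemma qform_le_snorm n (E D : 'M[R]_n) x : (forall i j, `|E i j| <= `|D i j|) ->
  `|qform E x| <= snorm D * sqnorm x.
Proof.
move=> ED; rewrite qformE.
apply: (le_trans (ler_norm_sum _ _ _)).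
apply: (@le_trans _ _ (\sum_i \sum_j `|D i j| * ((x 0 i ^+ 2 + x 0 j ^+ 2) / 2))).
  apply: ler_sum => i _; apply: (le_trans (ler_norm_sum _ _ _)).
  apply: ler_sum => j _; rewrite !normrM mulrAC [in X in _ <= X]mulrC.
  apply: ler_pM => //.
  rewrite -(real_normK (num_real (x 0 i))) -(real_normK (num_real (x 0 j))).
  have := sqr_ge0 (`|x 0 i| - `|x 0 j|); lra.
have -> : \sum_i \sum_j `|D i j| * ((x 0 i ^+ 2 + x 0 j ^+ 2) / 2) =
    (\sum_i x 0 i ^+ 2 * \sum_j `|D i j| + \sum_j x 0 j ^+ 2 * \sum_i `|D i j|) / 2.
  have -> : \sum_j x 0 j ^+ 2 * \sum_i `|D i j| = \sum_i \sum_j x 0 j ^+ 2 * `|D i j|.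
    by rewrite [RHS]exchange_big; apply: eq_bigr => j _; rewrite mulr_sumr.
  rewrite -big_split mulr_suml /=; apply: eq_bigr => i _.
  rewrite mulr_sumr -big_split mulr_suml /=; apply: eq_bigr => j _; ring.
have rows : \sum_i x 0 i ^+ 2 * \sum_j `|D i j| <= snorm D * sqnorm x.
  rewrite mulr_sumr; apply: ler_sum => i _; rewrite mulrC.
  by apply: ler_wpM2r; [exact: sqr_ge0 | exact: row_le_snorm].
have cols : \sum_j x 0 j ^+ 2 * \sum_i `|D i j| <= snorm D * sqnorm x.
  rewrite mulr_sumr; apply: ler_sum => j _; rewrite mulrC.
  by apply: ler_wpM2r; [exact: sqr_ge0 | exact: col_le_snorm].
lra.
Qed.

End QuadraticForms.

Section LoewnerDeterminant.
Variable R : realType.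

Definition schur_compl n (A : 'M[R]_(1 + n)) : 'M[R]_n :=
  drsubmx A - (ulsubmx A 0 0)^-1 *: (dlsubmx A *m ursubmx A).

Lemma det_schur_compl n (A : 'M[R]_(1 + n)) : ulsubmx A 0 0 != 0 ->
  \det A = ulsubmx A 0 0 * \det (schur_compl A).
Proof.
set p := ulsubmx A 0 0 => p0.
pose E : 'M[R]_(1 + n) := block_mx 1%:M 0 (- p^-1 *: dlsubmx A) 1%:M.
have EA : E *m A = block_mx (ulsubmx A) (ursubmx A) 0 (schur_compl A).
  rewrite -[A in E *m A](submxK A) /E mulmx_block !mul1mx !mul0mx !addr0.
  congr block_mx.
    rewrite [ulsubmx A]mx11_scalar -/p mul_mx_scalar scalerA mulrN mulfV //.
    by rewrite scaleN1r addNr.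
  by rewrite -scalemxAl scaleNr addrC.
have := congr1 determinant EA.
by rewrite det_mulmx det_lblock !det1 mulr1 mul1r det_ublock det_mx11.
Qed.

Lemma schur_compl_sym n (A : 'M[R]_(1 + n)) : A^T = A -> (schur_compl A)^T = schur_compl A.
Proof.
move=> sA; have dlA : dlsubmx A = (ursubmx A)^T by rewrite trmx_ursub sA.
by rewrite /schur_compl linearB /= linearZ /= trmx_mul trmx_drsub sA dlA trmxK.
Qed.

Lemma qform_block n (A : 'M[R]_(1 + n)) (y0 : R) (z : 'rV[R]_n) : A^T = A ->
  qform A (row_mx y0%:M z) = y0 ^+ 2 * ulsubmx A 0 0
     + 2 * y0 * (ursubmx A *m z^T) 0 0 + qform (drsubmx A) z.
Proof.
move=> sA.
have dlA : dlsubmx A = (ursubmx A)^T by rewrite trmx_ursub sA.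
rewrite /qform -[X in _ *m X *m _](submxK A) tr_row_mx mul_row_block mul_row_col.
rewrite !mulmxDl tr_scalar_mx !mul_mx_scalar !mul_scalar_mx dlA.
have -> : z *m (ursubmx A)^T = (ursubmx A *m z^T)^T by rewrite trmx_mul trmxK.
by rewrite -scalemxAl !mxE; ring.
Qed.

Lemma qform_block_sq n (A : 'M[R]_(1 + n)) (y0 : R) (z : 'rV[R]_n) : A^T = A ->
  let p := ulsubmx A 0 0 in p != 0 ->
  qform A (row_mx y0%:M z) =
    p * (y0 + (ursubmx A *m z^T) 0 0 / p) ^+ 2 + qform (schur_compl A) z.
Proof.
move=> sA p p0; rewrite qform_block // /schur_compl qformBl qformZl.
have -> : qform (dlsubmx A *m ursubmx A) z = ((ursubmx A *m z^T) 0 0) ^+ 2.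
  have dlA : dlsubmx A = (ursubmx A)^T by rewrite trmx_ursub sA.
  rewrite /qform dlA mulmxA -mulmxA.
  have -> : z *m (ursubmx A)^T = (ursubmx A *m z^T)^T by rewrite trmx_mul trmxK.
  by rewrite [LHS]mxE big_ord1 mxE expr2.
by rewrite -/p; field.
Qed.

Lemma det_loewner_mono n (P Q : 'M[R]_n) : P^T = P -> Q^T = Q ->
  (forall x, x != 0 -> 0 < qform P x) -> (forall x, qform P x <= qform Q x) ->
  0 < \det P /\ \det P <= \det Q.
Proof.
elim: n P Q => [|n IH]; first by move=> P Q; rewrite !det_mx00.
rewrite -[n.+1]/(1 + n)%N => P Q sP sQ P_pd PQ.
have e0 : (row_mx 1%:M 0 : 'rV[R]_(1 + n)) != 0.
  by rewrite row_mx_eq0 negb_and -[1%:M]/(1 : 'M[R]_1) oner_neq0.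
have pivotE (A : 'M[R]_(1 + n)) : A^T = A -> qform A (row_mx 1%:M 0) = ulsubmx A 0 0.
  by move=> sA; rewrite qform_block // trmx0 mulmx0 qform0 !mxE; ring.
have p_gt0 : 0 < ulsubmx P 0 0 by rewrite -pivotE // P_pd.
have q_gt0 : 0 < ulsubmx Q 0 0 by rewrite -pivotE //; apply: lt_le_trans (P_pd _ e0) (PQ _).
have pq : ulsubmx P 0 0 <= ulsubmx Q 0 0 by rewrite -!pivotE.
(* The Schur complement form is the minimum of [y0 |-> qform A (y0, z)]. *)
have schur_min (A : 'M[R]_(1 + n)) y0 z : A^T = A -> 0 < ulsubmx A 0 0 ->
    qform (schur_compl A) z <= qform A (row_mx y0%:M z).
  move=> sA a0; rewrite qform_block_sq ?gt_eqF // lerDr.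
  by rewrite mulr_ge0 ?sqr_ge0 ?ltW.
have schur_attained (A : 'M[R]_(1 + n)) z : A^T = A -> 0 < ulsubmx A 0 0 ->
    qform (schur_compl A) z =
    qform A (row_mx (- ((ursubmx A *m z^T) 0 0 / ulsubmx A 0 0))%:M z).
  by move=> sA a0; rewrite qform_block_sq ?gt_eqF // addNr expr0n mulr0 add0r.
have [dS_gt0 dS_le] : 0 < \det (schur_compl P) /\ \det (schur_compl P) <= \det (schur_compl Q).
  apply: IH; rewrite ?schur_compl_sym //.
    by move=> z z0; rewrite schur_attained //; apply: P_pd; rewrite row_mx_eq0 negb_and z0 orbT.
  by move=> z; rewrite (schur_attained Q) //; apply: le_trans (schur_min _ _ _ sP p_gt0) (PQ _).
rewrite (det_schur_compl (A := P)) ?gt_eqF // (det_schur_compl (A := Q)) ?gt_eqF //.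
split; first exact: mulr_gt0.
by apply: ler_pM => //; exact: ltW.
Qed.

Lemma coercive_det_gt0 n L0 (P : 'M[R]_n) : 0 < L0 -> P^T = P -> coercive L0 P ->
  P \in unitmx /\ 0 < \det P.
Proof.
move=> L0_gt0 sP PL0.
have [dP_gt0 _] := det_loewner_mono sP sP (coercive_qform_gt0 L0_gt0 PL0) (fun x => lexx _).
by rewrite unitmxE unitfE gt_eqF.
Qed.

End LoewnerDeterminant.

Section Perturbation.
Variable R : realType.

(* Young's inequality [w u <= (L0 u^2 + w^2 / L0) / 2] applied to [qform P u = <w, u>]. *)
Lemma sqnorm_mul_invmx_le n (P : 'M[R]_n) (L0 : R) w : 0 < L0 -> P^T = P ->
  P \in unitmx -> coercive L0 P -> sqnorm (w *m invmx P) <= sqnorm w / L0 ^+ 2.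
Proof.
move=> L0_gt0 sP uP PL0; set u := w *m invmx P.
have Pu : qform P u = \sum_i w 0 i * u 0 i.
  by rewrite /qform /u mulmxKV // mxE; apply: eq_bigr => i _; rewrite mxE.
have young : \sum_i w 0 i * u 0 i <= (L0 * sqnorm u + sqnorm w / L0) / 2.
  rewrite /sqnorm mulr_sumr mulr_suml -big_split mulr_suml /=.
  apply: ler_sum => i _; rewrite -subr_ge0.
  have -> : (L0 * u 0 i ^+ 2 + w 0 i ^+ 2 / L0) / 2 - w 0 i * u 0 i =
      (L0 * u 0 i - w 0 i) ^+ 2 / (2 * L0) by field; rewrite gt_eqF.
  by rewrite divr_ge0 ?sqr_ge0 // mulr_ge0 // ltW.
have := PL0 u; rewrite Pu => lb.
rewrite ler_pdivlMr ?exprn_gt0 // expr2 mulrA -ler_pdivlMr // mulrC.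
lra.
Qed.

Section Comparison.
Variables (n : nat) (P Q : 'M[R]_n) (L0 s : R).
Hypotheses (L0_gt0 : 0 < L0) (s_ge0 : 0 <= s) (P_sym : P^T = P) (Q_sym : Q^T = Q).
Hypotheses (P_coer : coercive L0 P) (Q_coer : coercive L0 Q).
Hypothesis PQ_le : forall x, `|qform (P - Q) x| <= s * sqnorm x.

(* [Q <= (1 + s / L0) P] in the Loewner order, and [(1 + s / L0)^n <= exp(n s / L0)]. *)
Lemma det_le_expR_det : \det Q <= expR (n%:R * (s / L0)) * \det P.
Proof.
set c := 1 + s / L0.
have c_ge0 : 0 <= c by rewrite addr_ge0 // divr_ge0 // ltW.
have QcP x : qform Q x <= qform (c *: P) x.
  rewrite qformZl mulrDl mul1r.
  have := PQ_le x; rewrite qformBl => /ler_normlP [QPx _].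
  suff : s * sqnorm x <= s / L0 * qform P x by lra.
  by rewrite -mulrA ler_wpM2l // ler_pdivlMl // mulrC.
have cP_sym : (c *: P)^T = c *: P by rewrite linearZ /= P_sym.
have [_ dQ_le] := det_loewner_mono Q_sym cP_sym (coercive_qform_gt0 L0_gt0 Q_coer) QcP.
have [_ dP_gt0] := coercive_det_gt0 L0_gt0 P_sym P_coer.
apply: le_trans dQ_le _; rewrite detZ; apply: ler_wpM2r; first exact: ltW.
rewrite expRM_natl; apply: lerXn2r; rewrite ?nnegrE ?expR_ge0 //.
exact: expR_ge1Dx.
Qed.

(* With [u = w P^-1] and [v = w Q^-1] the difference is [-bform (P - Q) u v], which is
   bounded through the polarization identity. *)
Lemma invmx_qform_dist w :
  `|qform (invmx P) w - qform (invmx Q) w| <= s * sqnorm w / L0 ^+ 2.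
Proof.
have [uP _] := coercive_det_gt0 L0_gt0 P_sym P_coer.
have [uQ _] := coercive_det_gt0 L0_gt0 Q_sym Q_coer.
set u := w *m invmx P; set v := w *m invmx Q.
have D_sym : (P - Q)^T = P - Q by rewrite linearB /= P_sym Q_sym.
have PwE : qform (invmx P) w = bform Q u v.
  have wQv : w^T = Q *m v^T by rewrite -[Q in RHS]Q_sym -trmx_mul /v mulmxKV.
  by rewrite /qform /bform wQv mulmxA.
have QwE : qform (invmx Q) w = bform P u v.
  have wPu : w^T = P *m u^T by rewrite -[P in RHS]P_sym -trmx_mul /u mulmxKV.
  by rewrite /qform wPu mulmxA -/(bform P v u) bformC.
have -> : qform (invmx P) w - qform (invmx Q) w = - bform (P - Q) u v.
  by rewrite PwE QwE /bform mulmxBr mulmxBl !mxE; ring.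
have := PQ_le (u + v); have := PQ_le (u - v).
rewrite qformBr // qformDr // normrN => /ler_normlP [h1 h2] /ler_normlP [h3 h4].
have hu := sqnorm_mul_invmx_le w L0_gt0 P_sym uP P_coer.
have hv := sqnorm_mul_invmx_le w L0_gt0 Q_sym uQ Q_coer.
have par : sqnorm (u + v) + sqnorm (u - v) = 2 * sqnorm u + 2 * sqnorm v.
  rewrite /sqnorm -big_split !mulr_sumr -big_split /=; apply: eq_bigr => i _.
  by rewrite !mxE; ring.
have su : s * sqnorm u <= s * (sqnorm w / L0 ^+ 2) by rewrite ler_wpM2l.
have sv : s * sqnorm v <= s * (sqnorm w / L0 ^+ 2) by rewrite ler_wpM2l.
rewrite ler_norml; apply/andP; split; nra.
Qed.

End Comparison.
End Perturbation.

Section WeightedMatrices.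
Variable R : realType.

Lemma is_derive_expR_weight (k mu t : R) : mu != 0 ->
  is_derive t 1 (fun s : R => k * ((1 - expR (- mu * s)) / mu)) (k * expR (- mu * t)).
Proof.
move=> mu0; apply: trigger_derive.
by rewrite /GRing.scale /= !mulr1 mulr0 !add0r; field.
Qed.

Variables (n : nat) (lam : 'I_n -> R).
Hypothesis lam_gt0 : forall i, 0 < lam i.

(* [t |-> qform (mat_t lam c t) y] vanishes at [0] and has derivative
   [qform c (y_i e^{-lam_i t})_i >= 0]. *)
Lemma qform_mat_t_ge0 (c : 'M[R]_n) y t : (forall z, 0 <= qform c z) -> 0 <= t ->
  0 <= qform (mat_t lam c t) y.
Proof.
move=> c_psd t_ge0.
pose k i j := y 0 i * c i j * y 0 j.
pose mu i j := lam i + lam j.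
pose f s := qform (mat_t lam c s) y.
have fE : f = \sum_i \sum_j (fun s => k i j * ((1 - expR (- mu i j * s)) / mu i j)).
  apply/funext => s; rewrite /f qformE fct_sumE; apply: eq_bigr => i _.
  by rewrite fct_sumE; apply: eq_bigr => j _; rewrite mxE /k /mu; ring.
have f' (s : R) : is_derive s 1 f (qform c (\row_i (y 0 i * expR (- lam i * s)))).
  have -> : qform c (\row_i (y 0 i * expR (- lam i * s))) =
      \sum_i \sum_j k i j * expR (- mu i j * s).
    rewrite qformE; apply: eq_bigr => i _; apply: eq_bigr => j _.
    rewrite !mxE /k /mu opprD mulrDl expRD; ring.
  rewrite fE; apply: is_derive_sum => i; apply: is_derive_sum => j.
  by apply: is_derive_expR_weight; rewrite gt_eqF ?addr_gt0.
have f0 : f 0 = 0.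
  rewrite /f qformE big1 // => i _; rewrite big1 // => j _.
  by rewrite mxE mulr0 expR0 subrr !(mulr0, mul0r).
rewrite -[qform _ y]/(f t) -f0.
have f_cont : continuous f.
  move=> x; apply/differentiable_continuous/derivable1_diffP.
  by apply: ex_derive; exact: f'.
apply: (@ger0_derive1_ndecry _ f 0) => //.
- by move=> x _; have df := f' x; rewrite derive1E derive_val.
- exact: continuous_subspaceT.
Qed.

Lemma g_t_gt0 t i : 0 < t -> 0 < g_t lam t i.
Proof.
move=> t_gt0; rewrite /g_t divr_gt0 ?mulr_gt0 // subr_gt0 expR_lt1 mulNr oppr_lt0.
by rewrite !mulr_gt0.
Qed.

Lemma mat_t_diag (a : 'M[R]_n) t i : mat_t lam a t i i = a i i * g_t lam t i.
Proof.
by rewrite mxE /g_t (_ : lam i + lam i = 2 * lam i) ?mulrA //; ring.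
Qed.

Lemma mat_tB (a b : 'M[R]_n) t : mat_t lam (a - b) t = mat_t lam a t - mat_t lam b t.
Proof. by apply/matrixP => i j; rewrite !mxE; ring. Qed.

Lemma tilde_matE (a : 'M[R]_n) t i j : tilde_mat lam a t i j =
  Num.sqrt (g_t lam t i)^-1 * Num.sqrt (g_t lam t j)^-1 * mat_t lam a t i j.
Proof. by rewrite /tilde_mat /Ghalf mul_diag_mx mul_mx_diag !mxE; ring. Qed.

Lemma tilde_mat_diag (a : 'M[R]_n) t i : 0 < t -> tilde_mat lam a t i i = a i i.
Proof.
move=> t_gt0; have g_gt0 := g_t_gt0 i t_gt0.
rewrite tilde_matE mat_t_diag -expr2 sqr_sqrtr ?invr_ge0 ?ltW //.
by field; rewrite gt_eqF.
Qed.

Lemma tilde_mat_sym (a : 'M[R]_n) t : a^T = a -> (tilde_mat lam a t)^T = tilde_mat lam a t.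
Proof.
move=> sa; apply/matrixP => i j; rewrite mxE !tilde_matE !mxE [lam j + lam i]addrC.
have -> : a j i = a i j by rewrite -[a in LHS]sa mxE.
ring.
Qed.

Lemma tilde_matB (a b : 'M[R]_n) t :
  tilde_mat lam (a - b) t = tilde_mat lam a t - tilde_mat lam b t.
Proof. by rewrite /tilde_mat mat_tB mulmxBr mulmxBl. Qed.

Lemma qform_tilde_mat (a : 'M[R]_n) t x :
  qform (tilde_mat lam a t) x = qform (mat_t lam a t) (x *m Ghalf lam t).
Proof. by rewrite /qform /tilde_mat trmx_mul /Ghalf tr_diag_mx !mulmxA. Qed.

Lemma tilde_mat_psd (c : 'M[R]_n) t x : (forall z, 0 <= qform c z) -> 0 <= t ->
  0 <= qform (tilde_mat lam c t) x.
Proof. by move=> c_psd t_ge0; rewrite qform_tilde_mat qform_mat_t_ge0. Qed.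

Lemma tilde_mat_scalar (k : R) t : 0 < t -> tilde_mat lam k%:M t = k%:M.
Proof.
move=> t_gt0; apply/matrixP => i j; case: (eqVneq i j) => [<-|ij].
  by rewrite tilde_mat_diag // !mxE eqxx.
by rewrite tilde_matE !mxE (negbTE ij) !(mulr0n, mul0r, mulr0).
Qed.

Lemma tilde_mat_coercive (a : 'M[R]_n) t L0 : 0 < t -> coercive L0 a ->
  coercive L0 (tilde_mat lam a t).
Proof.
move=> t_gt0 a_coer x.
rewrite -subr_ge0 -qform_scalar -qformBl -(tilde_mat_scalar L0 t_gt0) -tilde_matB.
by apply: tilde_mat_psd (ltW t_gt0) => z; rewrite qformBl qform_scalar subr_ge0.
Qed.

(* [tilde_mat lam a t] is the Schur product of [a] with [tilde_mat lam (const_mx 1) t], which is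
   positive semidefinite with unit diagonal, hence has entries of modulus at most one. *)
Lemma tilde_mat_norm_le (a : 'M[R]_n) t i j : 0 < t -> `|tilde_mat lam a t i j| <= `|a i j|.
Proof.
move=> t_gt0; set E := tilde_mat lam (const_mx 1) t.
have E_sym : E^T = E by apply: tilde_mat_sym; rewrite trmx_const.
have E_psd z : 0 <= qform E z.
  apply: tilde_mat_psd (ltW t_gt0) => y.
  suff -> : qform (const_mx 1) y = (\sum_i y 0 i) ^+ 2 by exact: sqr_ge0.
  rewrite qformE expr2 mulr_suml; apply: eq_bigr => l _.
  by rewrite mulr_sumr; apply: eq_bigr => l' _; rewrite mxE mulr1.
have one_diag l : (const_mx 1 : 'M[R]_n) l l = 1 by rewrite mxE.
have := psd_entry_le i j E_sym E_psd; rewrite !tilde_mat_diag // !one_diag => E_le.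
have -> : tilde_mat lam a t i j = a i j * E i j by rewrite !tilde_matE !mxE; ring.
by rewrite normrM ler_piMr //; lra.
Qed.

End WeightedMatrices.

Section GaussianRatio.
Variable R : realType.

Lemma sqrt_expR (x : R) : Num.sqrt (expR x) = expR (x / 2).
Proof.
have -> : expR x = expR (x / 2) ^+ 2 by rewrite -expRM_natl; congr expR; field.
by rewrite sqrtr_sqr ger0_norm // expR_ge0.
Qed.

Lemma Qm_invmx_ratio n (w : 'rV[R]_n) (A B : 'M[R]_n) : 0 < \det A -> 0 < \det B ->
  Qm w (invmx A) / Qm w (invmx B) =
  Num.sqrt (\det B / \det A) * expR ((qform (invmx B) w - qform (invmx A) w) / 2).
Proof.
move=> dA_gt0 dB_gt0; rewrite /Qm !det_inv.
have K_gt0 : 0 < (2 * pi) `^ (- (n%:R / 2)) :> R by rewrite powR_gt0 // mulr_gt0 // pi_gt0.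
have sA_gt0 : 0 < Num.sqrt (\det A) by rewrite sqrtr_gt0.
have sB_gt0 : 0 < Num.sqrt (\det B) by rewrite sqrtr_gt0.
set qA := qform (invmx A) w; set qB := qform (invmx B) w.
have -> : (qB - qA) / 2 = - (qA / 2) + - - (qB / 2) by field.
rewrite sqrtrM ?ltW // !sqrtrV ?ltW // expRD [expR (- - _)]expRN.
by field; rewrite !gt_eqF ?expR_gt0.
Qed.

Lemma sqrt_ratio_le (u v th : R) : 0 < u -> 0 < v ->
  v <= expR th * u -> u <= expR th * v ->
  expR (- (th / 2)) <= Num.sqrt (v / u) <= expR (th / 2).
Proof.
move=> u_gt0 v_gt0 vu uv; rewrite -mulNr -!sqrt_expR.
apply/andP; split; rewrite ler_sqrt ?expR_ge0 //.
  by rewrite ler_pdivlMr // expRN ler_pdivrMl ?expR_gt0.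
rewrite divr_ge0 ?ltW //.
by rewrite ler_pdivrMr.
Qed.

Lemma expR_sandwichM (u v a b : R) :
  expR (- a) <= u <= expR a -> expR (- b) <= v <= expR b ->
  expR (- (a + b)) <= u * v <= expR (a + b).
Proof.
move=> /andP [au ua] /andP [bv vb]; rewrite opprD !expRD.
have u_ge0 : 0 <= u := le_trans (expR_ge0 _) au.
have v_ge0 : 0 <= v := le_trans (expR_ge0 _) bv.
by apply/andP; split; apply: ler_pM; rewrite ?expR_ge0.
Qed.

Lemma abs_sub1_le_expR (X y : R) : expR (- y) <= X <= expR y -> 0 <= y ->
  `|X - 1| <= y * expR y.
Proof.
move=> /andP [lo hi] y_ge0.
have e_ge1 : 1 <= expR y by rewrite -expR0 ler_expR.
have eN_ge := expR_ge1Dx (- y).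
have eNe : expR y * expR (- y) = 1 by rewrite expRxMexpNx_1.
have up : expR y - 1 <= y * expR y by nra.
rewrite ler_norml; apply/andP; split; nra.
Qed.

Lemma Qm_invmx_ratio_sub1_le n (w : 'rV[R]_n) (A B : 'M[R]_n) (th ph : R) :
  0 < \det A -> 0 < \det B -> \det B <= expR th * \det A -> \det A <= expR th * \det B ->
  `|qform (invmx B) w - qform (invmx A) w| <= ph -> 0 <= th ->
  `|Qm w (invmx A) / Qm w (invmx B) - 1| <= (th / 2 + ph / 2) * expR (th / 2 + ph / 2).
Proof.
move=> dA_gt0 dB_gt0 dB_le dA_le q_le th_ge0.
have ph_ge0 : 0 <= ph := le_trans (normr_ge0 _) q_le.
have sqrt_bd := sqrt_ratio_le dA_gt0 dB_gt0 dB_le dA_le.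
have expR_bd : expR (- (ph / 2)) <=
    expR ((qform (invmx B) w - qform (invmx A) w) / 2) <= expR (ph / 2).
  by move: q_le; rewrite ler_norml !ler_expR => /andP [? ?]; apply/andP; split; lra.
rewrite Qm_invmx_ratio //; apply: abs_sub1_le_expR (expR_sandwichM sqrt_bd expR_bd) _.
lra.
Qed.

End GaussianRatio.

Theorem proposition4p7 (R : realType) (M : R) (hM : 0 < M) :
  exists c1 : R, forall (m : nat) (lam : 'I_m -> R) (L0 L1 : R)
    (a b : 'M[R]_m) (w : 'rV[R]_m),
    (0 < m)%N ->
    (forall i, 0 < lam i) ->
    (forall i j : 'I_m, (i <= j)%N -> lam i <= lam j) ->
    0 < L0 -> L0 <= L1 ->
    posdef a -> posdef b ->
    loewner_bounds L0 L1 a -> loewner_bounds L0 L1 b ->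
    let theta := L0^-1 * m%:R * snorm (a - b) in
    let phi := L0^-2 * sqnorm w * snorm (a - b) in
    theta < M -> phi < M ->
    forall t : R, 0 < t ->
      `| Qm w (Tilde_inv lam a t) / Qm w (Tilde_inv lam b t) - 1 |
        <= c1 * (phi + theta).
Proof.
exists (expR M / 2) => m lam L0 L1 a b w _ lam_gt0 _ L0_gt0 _ [a_sym _] [b_sym _]
  a_bd b_bd theta phi theta_lt phi_lt t t_gt0.
set s := snorm (a - b); set A := tilde_mat lam a t; set B := tilde_mat lam b t.
have s_ge0 : 0 <= s := snorm_ge0 _.
have A_sym : A^T = A := tilde_mat_sym _ _ a_sym.
have B_sym : B^T = B := tilde_mat_sym _ _ b_sym.
have A_coer := tilde_mat_coercive lam_gt0 t_gt0 (fun x => proj1 (andP (a_bd x))).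
have B_coer := tilde_mat_coercive lam_gt0 t_gt0 (fun x => proj1 (andP (b_bd x))).
have AB_le x : `|qform (A - B) x| <= s * sqnorm x.
  by rewrite -tilde_matB; apply: qform_le_snorm => i j; exact: tilde_mat_norm_le.
have BA_le x : `|qform (B - A) x| <= s * sqnorm x by rewrite qformBl distrC -qformBl.
have [_ dA_gt0] := coercive_det_gt0 L0_gt0 A_sym A_coer.
have [_ dB_gt0] := coercive_det_gt0 L0_gt0 B_sym B_coer.
have dB_le := det_le_expR_det L0_gt0 s_ge0 A_sym B_sym A_coer B_coer AB_le.
have dA_le := det_le_expR_det L0_gt0 s_ge0 B_sym A_sym B_coer A_coer BA_le.
have q_le := invmx_qform_dist L0_gt0 s_ge0 A_sym B_sym A_coer B_coer AB_le w.
have thetaE : m%:R * (s / L0) = theta by rewrite /theta -/s; field; rewrite gt_eqF.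
have phiE : s * sqnorm w / L0 ^+ 2 = phi by rewrite /phi -/s; field; rewrite gt_eqF.
rewrite thetaE in dA_le dB_le; rewrite phiE distrC in q_le.
have theta_ge0 : 0 <= theta by rewrite -thetaE mulr_ge0 // divr_ge0 // ltW.
have phi_ge0 : 0 <= phi := le_trans (normr_ge0 _) q_le.
apply: le_trans (Qm_invmx_ratio_sub1_le dA_gt0 dB_gt0 dB_le dA_le q_le theta_ge0) _.
have : expR (theta / 2 + phi / 2) <= expR M by rewrite ler_expR; lra.
nra.
Qed.
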